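(* Let $R$ be a ring such that every ideal generated by a strong parameter sequence on $R$ is unmixed. Then $R$ is Cohen-Macaulay.
   Context: All rings are commutative with identity. For an $R$-module $M$, a prime $P$ is weakly associated to $M$ if $P$ is minimal over $(0:_Rz)$ for some $z\in M$; $\operatorname{wAss}_R M$ is the set of such primes, and $\operatorname{Min}_R M$ denotes the set of minimal primes of the support of $M$. An ideal $I$ is unmixed if $\operatorname{wAss}_R R/I=\operatorname{Min}_R R/I$. For $x\in R$ let $C(x)$ be the complex $0\to R\to R_x\to 0$ ($R$ in degree $0$, natural localization map); for a finite sequence $\mathbf x=x_1,\dots,x_\ell$ put $C(\mathbf x)=C(x_1)\otimes_R\cdots\otimes_R C(x_\ell)$ and let $H^i_{\mathbf x}(M)$ be the $i$th cohomology of $C(\mathbf x)\otimes_R M$; $\ell(\mathbf x)=\ell$. Let $K(x)$ be $0\to R\xrightarrow{x}R\to 0$ (degrees $1,0$), $K(\mathbf x)=K(x_1)\otimes\cdots\otimes K(x_\ell)$, $H_i(\mathbf x)$ its homology. For $m\ge n$ the chain map $K(\mathbf x^m)\to K(\mathbf x^n)$ ($\mathbf x^m=x_1^m,\dots,x_\ell^m$) is the tensor product of the maps $K(x_i^m)\to K(x_i^n)$ given by multiplication by $x_i^{m-n}$ in degree $1$ and identity in degree $0$. $\mathbf x$ is weakly proregular if for every $n$ there is $m\ge n$ with $H_i(\mathbf x^m)\to H_i(\mathbf x^n)$ zero for all $i\ge1$. $\mathbf x$ is a parameter sequence on $R$ if it is weakly proregular, $(\mathbf x)R\neq R$, and $H^{\ell(\mathbf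 x)}_{\mathbf x}(R)_p\neq0$ for every prime $p\supseteq(\mathbf x)R$ (the empty sequence, generating the zero ideal, is a parameter sequence). It is a strong parameter sequence if $x_1,\dots,x_i$ is a parameter sequence for each $i=1,\dots,\ell(\mathbf x)$. A regular sequence on $M$: each $x_i$ is a non-zero-divisor on $M/(x_1,\dots,x_{i-1})M$ and $M\neq(\mathbf x)M$. A ring $R$ is Cohen-Macaulay if every strong parameter sequence on $R$ is a regular sequence on $R$. *)

From HB Require Import structures.
From mathcomp Require Import all_boot all_order all_algebra.
Set Implicit Arguments. Unset Strict Implicit. Unset Printing Implicit Defensive.
Import GRing.Theory.
Local Open Scope ring_scope.

Section CohenMacaulay.
Variable R : comNzRingType.

Definition subI (I J : R -> Prop) : Prop := forall r, I r -> J r.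

Definition is_ideal (I : R -> Prop) : Prop :=
  I 0 /\ (forall a b, I a -> I b -> I (a + b)) /\ (forall r a, I a -> I (r * a)).

Definition prime_ideal (P : R -> Prop) : Prop :=
  is_ideal P /\ ~ P 1 /\ (forall a b, P (a * b) -> P a \/ P b).

Definition ideal_gen (s : seq R) (r : R) : Prop :=
  exists c : 'I_(size s) -> R, r = \sum_(j < size s) c j * s`_j.

Definition minimal_prime_over (J P : R -> Prop) : Prop :=
  [/\ prime_ideal P, subI J P &
      forall Q, prime_ideal Q -> subI J Q -> subI Q P -> subI P Q].

(* (0 :_R z) for z = class of r in R/I, i.e. {a | a r \in I} *)
Definition ann_quot (I : R -> Prop) (r : R) : R -> Prop := fun a => I (a * r).

Definition wAss_quot (I P : R -> Prop) : Prop :=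
  exists r : R, minimal_prime_over (ann_quot I r) P.

(* P \in Supp_R (R/I): (R/I)_P <> 0, i.e. some r/1 is nonzero in (R/I)_P *)
Definition supp_quot (I P : R -> Prop) : Prop :=
  prime_ideal P /\ exists r : R, forall t, ~ P t -> ~ I (t * r).

Definition Min_quot (I P : R -> Prop) : Prop :=
  supp_quot I P /\ (forall Q, supp_quot I Q -> subI Q P -> subI P Q).

Definition unmixed (I : R -> Prop) : Prop :=
  forall P : R -> Prop, wAss_quot I P <-> Min_quot I P.

(* ---------- Koszul complex K(x), x : 'I_l -> R ----------
   K(x)_i is free on the e_S, S a subset of {0..l-1} with #|S| = i;
   a chain is f : {set 'I_l} -> R (coefficient of e_S), of degree i if
   supported on sets of cardinality i.
   d(e_S) = sum_(j in S) (-1)^#{k in S | k < j} x_j e_(S \ j). *)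
Definition kdeg (l : nat) (i : nat) (f : {set 'I_l} -> R) : Prop :=
  forall S : {set 'I_l}, #|S| != i -> f S = 0.

Definition koszul_d (l : nat) (x : 'I_l -> R) (f : {set 'I_l} -> R)
  : {set 'I_l} -> R :=
  fun T => \sum_(j < l | j \notin T)
             (-1) ^+ #|[set k in T | (k < j)%N]| * x j * f (j |: T).

Definition xpow (l : nat) (x : 'I_l -> R) (m : nat) : 'I_l -> R :=
  fun j => x j ^+ m.

(* the chain map K(x^m) -> K(x^n): e_S |-> (prod_(j in S) x_j^(m-n)) e_S *)
Definition koszul_map (l : nat) (x : 'I_l -> R) (e : nat)
  (f : {set 'I_l} -> R) : {set 'I_l} -> R :=
  fun S => (\prod_(j in S) x j ^+ e) * f S.

(* the induced map H_i(x^m) -> H_i(x^n) is zero *)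
Definition koszul_H_map_zero (l : nat) (x : 'I_l -> R) (m n i : nat) : Prop :=
  forall z : {set 'I_l} -> R,
    kdeg i z -> (forall T, koszul_d (xpow x m) z T = 0) ->
    exists w : {set 'I_l} -> R,
      kdeg i.+1 w /\
      (forall T, koszul_d (xpow x n) w T = koszul_map x (m - n) z T).

Definition seqfun (s : seq R) : 'I_(size s) -> R := fun j => s`_j.
Arguments seqfun : clear implicits.

Definition weakly_proregular (s : seq R) : Prop :=
  forall n : nat, exists2 m : nat, (n <= m)%N &
    forall i : nat, (0 < i)%N -> koszul_H_map_zero (seqfun s) m n i.

(* ---------- top Cech cohomology H^l_x(R) ----------
   With y = x_1 ... x_l, H^l_x(R) = R_y / sum_i im(R_{y/x_i} -> R_y).
   An element of R_y is a/y^k; a/y^k = b/y^j in R_y iff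
   y^N (a y^j - b y^k) = 0 for some N. The image of b_i/(y/x_i)^t in R_y
   is b_i x_i^t / y^t; a finite sum of such is taken over a common t. *)
Definition loc_eq (y a : R) (k : nat) (b : R) (j : nat) : Prop :=
  exists N : nat, y ^+ N * (a * y ^+ j - b * y ^+ k) = 0.

(* the class of a/y^k in H^l_x(R) is zero *)
Definition cech_top_zero (l : nat) (x : 'I_l -> R) (a : R) (k : nat) : Prop :=
  exists (t : nat) (b : 'I_l -> R),
    loc_eq (\prod_(j < l) x j) a k (\sum_(j < l) b j * x j ^+ t) t.

(* H^l_x(R)_P <> 0 : some element eta has t * eta <> 0 for all t \notin P *)
Definition cech_top_loc_nonzero (l : nat) (x : 'I_l -> R) (P : R -> Prop) : Prop :=
  exists (a : R) (k : nat), forall t, ~ P t -> ~ cech_top_zero x (t * a) k.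

Definition parameter_seq (s : seq R) : Prop :=
  [/\ weakly_proregular s, ~ ideal_gen s 1 &
      forall P, prime_ideal P -> subI (ideal_gen s) P ->
        cech_top_loc_nonzero (seqfun s) P].

Definition strong_parameter_seq (s : seq R) : Prop :=
  forall i : nat, (0 < i <= size s)%N -> parameter_seq (take i s).

Definition regular_seq (s : seq R) : Prop :=
  (forall i : nat, (i < size s)%N -> forall r : R,
     ideal_gen (take i s) (r * s`_i) -> ideal_gen (take i s) r)
  /\ ~ ideal_gen s 1.

Definition cohen_macaulay : Prop :=
  forall s : seq R, strong_parameter_seq s -> regular_seq s.

End CohenMacaulay.

(* Let x_1, ..., x_l be a strong parameter sequence, I = (x_1, ..., x_i) and
   r x_(i+1) in I.  If r were not in I, a prime P minimal over (I : r) would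
   contain x_(i+1); P is weakly associated to R/I, hence minimal in its support
   by unmixedness, so some u outside P kills a power of x_(i+1) modulo I.  Then
   a power of u annihilates the top Cech cohomology H^(i+1)_(x_1..x_(i+1))(R),
   contradicting that its localization at P is nonzero. *)

From mathcomp Require Import all_boot all_order all_algebra ring.
From mathcomp Require boolp classical_sets.
From Stdlib Require Import Classical.
Set Implicit Arguments. Unset Strict Implicit. Unset Printing Implicit Defensive.
Import GRing.Theory.
Local Open Scope ring_scope.

Lemma zorn_above (U : Type) (le : U -> U -> Prop) (Q : U -> Prop) (u0 : U) :
  (forall u, le u u) -> (forall u v w, le u v -> le v w -> le u w) ->
  Q u0 ->
  (forall C : U -> Prop, (forall X, C X -> Q X) ->
     (forall X Y, C X -> C Y -> le X Y \/ le Y X) -> (exists X, C X) ->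
     exists2 B, Q B & forall X, C X -> le X B) ->
  exists M, [/\ Q M, le u0 M & forall N, Q N -> le M N -> le N M].
Proof.
move=> le_refl le_trans Q0 chain_ub.
pose T := {u : U | Q u /\ le u0 u}.
pose t0 : T := exist _ u0 (conj Q0 (le_refl u0)).
pose leT := fun a b : T => boolp.asbool (le (sval a) (sval b)).
have [|||M maxM] := @classical_sets.ZL_preorder T t0 leT.
- by move=> a; apply/boolp.asboolP.
- by move=> a b c /boolp.asboolP ab /boolp.asboolP bc; apply/boolp.asboolP; apply: le_trans bc.
- move=> A totA; have [[a Aa]|noA] := classic (exists a, A a); last first.
    by exists t0 => b Ab; case: noA; exists b.
  have [B QB ubB] : exists2 B, Q B & forall X, (exists2 b, A b & sval b = X) -> le X B.
    apply: chain_ub.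
    + by move=> X [b _ <-]; case: (svalP b).
    + move=> X Y [b Ab <-] [c Ac <-].
      by case: (totA b c Ab Ac) => /boolp.asboolP; [left|right].
    + by exists (sval a), a.
  have u0B : le u0 B by apply: (le_trans _ (sval a)); [case: (svalP a)|apply: ubB; exists a].
  by exists (exist _ B (conj QB u0B)) => b Ab; apply/boolp.asboolP; apply: ubB; exists b.
- case: (svalP M) => QM u0M; exists (sval M); split => // N QN MN.
  have /(_ (introT (boolp.asboolP _) MN)) := maxM (exist _ N (conj QN (le_trans _ _ _ u0M MN))).
  by move/boolp.asboolP.
Qed.

Section Ideals.
Variable R : comNzRingType.
Implicit Types (I J K P Q : R -> Prop) (s t : seq R).

Lemma ideal_sum K (T : Type) (r : seq T) (p : pred T) (F : T -> R) :
  is_ideal K -> (forall j, p j -> K (F j)) -> K (\sum_(j <- r | p j) F j).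
Proof. by move=> [K0 [KD _]]; apply: big_ind. Qed.

Lemma ideal_mulr K a b : is_ideal K -> K a -> K (a * b).
Proof. by move=> [_ [_ KM]] Ka; rewrite mulrC; apply: KM. Qed.

Lemma ideal_exprD K u v a b :
  is_ideal K -> K (u ^+ a) -> K (v ^+ b) -> K ((u + v) ^+ (a + b)).
Proof.
move=> idK Ku Kv; have [_ [_ KM]] := idK.
rewrite exprDn; apply: ideal_sum => // j _; rewrite -mulr_natr.
apply: ideal_mulr => //; case: (leqP b j) => [bj|jb].
  by rewrite -(subnK bj) exprD mulrA; apply: KM.
have aj : (a <= a + b - j)%N by rewrite -addnBA ?leq_addr // ltnW.
by rewrite -(subnK aj) exprD mulrC mulrA; apply: KM.
Qed.

Lemma ideal_expr_sum K T n (F : 'I_n -> R) :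
  is_ideal K -> (forall j, K (F j ^+ T)) -> K ((\sum_(j < n) F j) ^+ (n * T).+1).
Proof.
move=> idK; elim: n F => [|n IH] F KF.
  by rewrite big_ord0 expr1; case: idK.
by rewrite big_ord_recr mulSn -addnS addnC; apply: ideal_exprD => //; apply: IH.
Qed.

Lemma ideal_gen_ideal s : is_ideal (ideal_gen s).
Proof.
split; first by exists (fun _ => 0); rewrite big1 // => j _; rewrite mul0r.
split=> [a b [c ->] [d ->]|r a [c ->]].
  by exists (fun j => c j + d j); rewrite -big_split; apply: eq_bigr => j _; rewrite mulrDl.
by exists (fun j => r * c j); rewrite mulr_sumr; apply: eq_bigr => j _; rewrite mulrA.
Qed.

Lemma ideal_gen_mem s j : (j < size s)%N -> ideal_gen s s`_j.
Proof.
move=> js; exists (fun k => (k == Ordinal js)%:R).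
by rewrite (bigD1 (Ordinal js)) //= eqxx mul1r big1 ?addr0 // => k /negbTE ->; rewrite mul0r.
Qed.

Lemma ideal_gen_sub s P :
  is_ideal P -> (forall j, (j < size s)%N -> P s`_j) -> subI (ideal_gen s) P.
Proof.
move=> idP Ps r [c ->]; apply: ideal_sum => // j _.
by case: idP => [_ [_ PM]]; apply/PM/Ps.
Qed.

Lemma ideal_gen_nat_coef s r :
  ideal_gen s r -> exists c : nat -> R, r = \sum_(j < size s) c j * s`_j.
Proof.
move=> [c ->]; exists (fun n => if insub n is Some k then c k else 0).
by apply: eq_bigr => j _; rewrite valK.
Qed.

Lemma prime_expr_notin P u m : prime_ideal P -> ~ P u -> ~ P (u ^+ m).
Proof.
move=> [_ [P1 Pmul]] Pu; elim: m => [|m IH]; first by rewrite expr0.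
by rewrite exprS => /Pmul [].
Qed.

Lemma ann_quot_ideal I r : is_ideal I -> is_ideal (ann_quot I r).
Proof.
move=> [I0 [ID IM]]; rewrite /ann_quot; split; first by rewrite mul0r.
split=> [a b Ia Ib|a b Ib]; first by rewrite mulrDl; apply: ID.
by rewrite -mulrA; apply: IM.
Qed.

Section Chains.
Variables (C : (R -> Prop) -> Prop) (X0 : R -> Prop).
Hypotheses (CX0 : C X0) (totC : forall X Y, C X -> C Y -> subI X Y \/ subI Y X).

Lemma ideal_chain_union :
  (forall X, C X -> is_ideal X) -> is_ideal (fun r => exists2 X, C X & X r).
Proof.
move=> idC; split; first by exists X0 => //; case: (idC X0 CX0).
split=> [a b [X CX Xa] [Y CY Yb]|r a [X CX Xa]].
  have [XY|YX] := totC CX CY.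
    by exists Y => //; have [_ [YD _]] := idC Y CY; apply: YD (XY a Xa) Yb.
  by exists X => //; have [_ [XD _]] := idC X CX; apply: XD Xa (YX b Yb).
by exists X => //; have [_ [_ XM]] := idC X CX; apply: XM.
Qed.

Lemma prime_chain_inter :
  (forall X, C X -> prime_ideal X) -> prime_ideal (fun r => forall X, C X -> X r).
Proof.
move=> prC; split.
  split; first by move=> X /prC [[]].
  split=> [a b Ca Cb X CX|r a Ca X CX].
    by have [[_ [XD _]] _] := prC X CX; apply: XD (Ca X CX) (Cb X CX).
  by have [[_ [_ XM]] _] := prC X CX; apply: XM (Ca X CX).
split; first by move=> C1; have [_ [X01 _]] := prC X0 CX0; apply: X01 (C1 X0 CX0).
move=> a b Cab; case: (classic (forall X, C X -> X a)); first by left.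
move=> /not_all_ex_not [X nXa]; have [CX Xa] := imply_to_and _ _ nXa.
right=> Y CY.
have [_ [_ Xp]] := prC X CX; have [_ [_ Yp]] := prC Y CY.
have [XY|YX] := totC CX CY.
  by case: (Xp a b (Cab X CX)) => [/Xa|/XY].
by case: (Yp a b (Cab Y CY)) => [/YX/Xa|].
Qed.

End Chains.

Section Avoiding.
Variable S : R -> Prop.
Hypotheses (S1 : S 1) (SM : forall a b, S a -> S b -> S (a * b)).

Lemma prime_of_max_avoiding M :
  is_ideal M -> (forall a, S a -> ~ M a) ->
  (forall N, is_ideal N -> subI M N -> (forall a, S a -> ~ N a) -> subI N M) ->
  prime_ideal M.
Proof.
move=> idM SnM maxM; have [M0 [MD MM]] := idM.
have meetS c : ~ M c -> exists m r, M m /\ S (m + r * c).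
  move=> Mc; apply: NNPP => noS.
  pose N := fun w => exists m r, M m /\ w = m + r * c.
  apply/Mc/(maxM N); last by exists 0, 1; split => //; ring.
  - split; first by exists 0, 0; split => //; ring.
    split=> [a b [m1 [r1 [M1 ->]]] [m2 [r2 [M2 ->]]]|r a [m1 [r1 [M1 ->]]]].
      by exists (m1 + m2), (r1 + r2); split; [apply: MD|ring].
    by exists (r * m1), (r * r1); split; [apply: MM|ring].
  - by move=> t Mt; exists t, 0; split => //; ring.
  - by move=> a Sa [m [r [Mm ea]]]; apply: noS; exists m, r; rewrite -ea.
split=> //; split; first exact: SnM S1.
move=> a b Mab; apply: NNPP => /not_or_and [Ma Mb].
have [m1 [r1 [M1 Sa]]] := meetS a Ma; have [m2 [r2 [M2 Sb]]] := meetS b Mb.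
apply: (SnM _ (SM Sa Sb)).
have -> : (m1 + r1 * a) * (m2 + r2 * b) = m1 * (m2 + r2 * b) + (r1 * a * m2 + r1 * r2 * (a * b)).
  by ring.
by apply: (MD); [apply: ideal_mulr|apply: MD; apply: MM].
Qed.

Lemma prime_ideal_avoiding I :
  is_ideal I -> (forall a, S a -> ~ I a) ->
  exists Q, [/\ prime_ideal Q, subI I Q & forall a, S a -> ~ Q a].
Proof.
move=> idI SnI.
have [C avC totC [X0 CX0]|M [[idM IM SnM] _ maxM]] :=
  @zorn_above (R -> Prop) (@subI R) (fun X => [/\ is_ideal X, subI I X & forall a, S a -> ~ X a]) I
    (fun X r Xr => Xr) (fun X Y Z XY YZ r Xr => YZ r (XY r Xr)) (And3 idI (fun r Ir => Ir) SnI).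
  exists (fun r => exists2 X, C X & X r); last by move=> X CX r Xr; exists X.
  split.
  - by apply: (ideal_chain_union CX0 totC) => X /avC [].
  - by move=> r Ir; exists X0 => //; have [_ IX0 _] := avC X0 CX0; apply: IX0.
  - by move=> a Sa [X CX Xa]; have [_ _ SnX] := avC X CX; apply: SnX Sa Xa.
exists M; split => //; apply: prime_of_max_avoiding => // N idN MN SnN.
by apply: maxM => //; split => // r /IM /MN.
Qed.

End Avoiding.

Lemma minimal_prime_over_below J Q :
  prime_ideal Q -> subI J Q -> exists P, minimal_prime_over J P /\ subI P Q.
Proof.
move=> prQ JQ.
have [C prC totC [X0 CX0]|P [[prP JP] PQ minP]] :=
  @zorn_above (R -> Prop) (fun X Y => subI Y X) (fun X => prime_ideal X /\ subI J X) Q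
    (fun X r Xr => Xr) (fun X Y Z XY YZ r Zr => XY r (YZ r Zr)) (conj prQ JQ).
  exists (fun r => forall X, C X -> X r); last by move=> X CX r CXr; apply: CXr.
  split.
  - apply: (prime_chain_inter CX0) => [X Y CX CY|X /prC [] //].
    by case: (totC X Y CX CY); [right|left].
  - by move=> r Jr X /prC [_ JX]; apply: JX.
by exists P; split => //; split => // P' prP' JP'; apply: minP.
Qed.

Lemma minimal_prime_over_ann_quot I r :
  is_ideal I -> ~ I r -> exists P, minimal_prime_over (ann_quot I r) P.
Proof.
move=> idI Ir.
have [|||Q [prQ JQ _]] := @prime_ideal_avoiding (eq 1) _ _ (ann_quot I r) (ann_quot_ideal r idI).
- by [].
- by move=> a b <- <-; rewrite mulr1.
- by move=> a <-; rewrite /ann_quot mul1r.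
by have [P [minP _]] := minimal_prime_over_below prQ JQ; exists P.
Qed.

Lemma Min_quot_loc_nilpotent I P x :
  is_ideal I -> Min_quot I P -> P x -> exists u n, ~ P u /\ I (u * x ^+ n).
Proof.
move=> idI [[prP _] minP] Px; apply: NNPP => noW; have [_ [P1 Pmul]] := prP.
pose S := fun a => exists u n, ~ P u /\ a = u * x ^+ n.
have S_notP a : ~ P a -> S a by exists a, 0%N; rewrite expr0 mulr1.
have [|||Q [prQ IQ SnQ]] := @prime_ideal_avoiding S _ _ I idI.
- by apply: S_notP.
- move=> _ _ [u1 [n1 [Pu1 ->]]] [u2 [n2 [Pu2 ->]]].
  by exists (u1 * u2), (n1 + n2)%N; split; [case/Pmul|rewrite exprD; ring].
- by move=> _ [u [n [Pu ->]]] Iu; apply: noW; exists u, n.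
have QP : subI Q P by move=> a Qa; apply: NNPP => /S_notP /SnQ.
have suppQ : supp_quot I Q by split=> //; exists 1 => a Qa; rewrite mulr1 => /IQ.
by apply: (SnQ x); [exists 1, 1%N; rewrite mul1r expr1|apply: minP].
Qed.

Lemma ideal_gen_rcons_sub t v P :
  is_ideal P -> subI (ideal_gen t) P -> P v -> subI (ideal_gen (rcons t v)) P.
Proof.
move=> idP tP Pv; apply: ideal_gen_sub => // j; rewrite size_rcons ltnS nth_rcons leq_eqVlt.
by case: ltnP => [jt _|_ /orP [/eqP ->|//]]; [apply/tP/ideal_gen_mem|rewrite eqxx].
Qed.

Lemma cech_top_zero_rcons t v u n :
  ideal_gen t (u * v ^+ n) ->
  forall a k, cech_top_zero (@seqfun _ (rcons t v)) (u ^+ (size t * k).+1 * a) k.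
Proof.
move=> [c uv] a k; set l := size t in c uv *; set m := (l * k).+1.
have [d ud] : exists d : nat -> R, u ^+ m * v ^+ (n * m) = \sum_(j < l) d j * t`_j ^+ k.
  have : ideal_gen [seq w ^+ k | w <- t] ((u * v ^+ n) ^+ m).
    rewrite uv; apply: ideal_expr_sum (ideal_gen_ideal _) _ => j.
    have [_ [_ KM]] := ideal_gen_ideal [seq w ^+ k | w <- t].
    rewrite exprMn; apply: KM; rewrite -(nth_map 0 0 (fun w => w ^+ k)) //.
    by apply: ideal_gen_mem; rewrite size_map.
  move=> /ideal_gen_nat_coef [d]; rewrite exprMn -exprM size_map => ->.
  by exists d; apply: eq_bigr => j _; rewrite (nth_map 0).
pose y := \prod_(j < l) t`_j.
pose cof (j : nat) := \prod_(i < l | val i != j) t`_i.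
have y_cof (j : 'I_l) : y = t`_j * cof j by rewrite /y (bigD1 j).
have prod_rcons : \prod_(j < size (rcons t v)) @seqfun _ (rcons t v) j = y * v.
  rewrite /seqfun size_rcons big_ord_recr /= nth_rcons ltnn eqxx.
  by congr (_ * _); apply: eq_bigr => j _; rewrite nth_rcons ltn_ord.
(* With Y = y v and e = n m + k: u^m a / Y^k = (sum_j b_j t_j^e) / Y^e,
   because u^m v^(n m) = sum_j d_j t_j^k and y = t_j cof_j. *)
exists (n * m + k)%N, (fun j => if (j < l)%N then a * d j * cof j ^+ (n * m) else 0), 0%N.
rewrite expr0 mul1r prod_rcons; apply/eqP; rewrite subr_eq0; apply/eqP.
rewrite /seqfun size_rcons big_ord_recr /= ltnn mul0r addr0 mulr_suml.
have -> : u ^+ m * a * (y * v) ^+ (n * m + k) =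
          a * (u ^+ m * v ^+ (n * m)) * y ^+ (n * m) * (y * v) ^+ k.
  by rewrite exprD !exprMn; ring.
rewrite ud !mulr_sumr !mulr_suml; apply: eq_bigr => j _.
by rewrite ltn_ord nth_rcons ltn_ord (y_cof j) exprD exprMn; ring.
Qed.

Lemma strong_parameter_seq_take s i :
  strong_parameter_seq s -> strong_parameter_seq (take i s).
Proof.
move=> sps j /andP [j0]; rewrite size_take_min leq_min => /andP [ji js].
by rewrite take_takel //; apply: sps; rewrite j0.
Qed.

Lemma strong_parameter_seq_proper s : strong_parameter_seq s -> ~ ideal_gen s 1.
Proof.
case: s => [_|x s sps]; first by case=> c; rewrite big_ord0 => /eqP; rewrite oner_eq0.
by have [] := sps (size (x :: s)) (leqnn _); rewrite take_size.
Qed.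

End Ideals.

Theorem proposition4p10 (R : comNzRingType) :
  (forall s : seq R, strong_parameter_seq s -> unmixed (ideal_gen s)) ->
  cohen_macaulay R.
Proof.
move=> unmixed_sps s sps; split; last exact: strong_parameter_seq_proper.
move=> i si r rxI; apply: NNPP => rI.
have idI := ideal_gen_ideal (take i s).
have [P annP] := minimal_prime_over_ann_quot idI rI.
have minP := (unmixed_sps (take i s) (strong_parameter_seq_take sps) P).1 (ex_intro _ r annP).
have [[prP _] _] := minP; have [_ annIP _] := annP.
have xP : P s`_i by apply: annIP; rewrite /ann_quot mulrC.
have [u [n [uP Iu]]] := Min_quot_loc_nilpotent idI minP xP.
have [_ _] := sps i.+1 si; rewrite (take_nth 0 si) => /(_ P prP) [].
  by apply: ideal_gen_rcons_sub prP.1 _ xP => a Ia; apply: annIP; apply: ideal_mulr idI Ia.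
move=> a [k /(_ (u ^+ (size (take i s) * k).+1))] akP.
by apply: akP (prime_expr_notin prP uP) (cech_top_zero_rcons Iu a k).
Qed.
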